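(* For every $\theta\in V_\Lambda$, $\mathcal W(\theta)$ is a pseudo-wide subcategory of $\mathcal G$, and it is closed under arbitrary extensions: if $0\to X\to Z\to Y\to 0$ is exact with $X,Y\in\mathcal W(\theta)$ then $Z\in\mathcal W(\theta)$.
   Context: Let $\Lambda$ be a finite dimensional algebra over a field with $n$ isoclasses of simple modules, and $\mathrm{mod}\text-\Lambda$ the category of finitely generated right $\Lambda$-modules. Fix a torsion class $\mathcal G\subseteq\mathrm{mod}\text-\Lambda$ (closed under isomorphisms, extensions and quotients). For $B\in\mathcal G$, a subobject of $B$ is a submodule in $\mathcal G$; a subobject $A\subseteq B$ is strict if $A\cap B'\in\mathcal G$ for every subobject $B'$ of $B$; a strict quotient of $B$ is $B/A$ with $A$ a strict subobject. A short exact sequence $0\to A\to B\to C\to 0$ in $\mathcal G$ is strict exact if $A$ is a strict subobject of $B$. A strict morphism is a homomorphism $f:A\to B$ with $A,B\in\mathcal G$ such that $\ker f\in\mathcal G$ is a strict subobject of $A$ and $\operatorname{im} f$ is a strict subobject of $B$. A pseudo-wide subcategory of $\mathcal G$ is a nonempty class $\mathcal W\subseteq\mathcal G$ (with strict morphisms) such that for every strict morphism $f:A\to B$ with $A,B\in\mathcal W$, the modules $\ker f$, $\operatorname{im} f$, $\operatorname{coker} f$ lie in $\mathcal W$, and $\mathcal W$ is closed under strict extensions. Let $V_\Lambda=\mathrm{Hom}_{\mathbb Z}(K_0\Lambda,\mathbb R)\cong\mathbb R^n$; for $\theta\in V_\Lambda$, $\theta(M)$ denotes $\theta$ applied to the dimension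 vector of $M$. For $M\in\mathcal G$, $D_{\mathcal G}(M)$ is the set of $\theta\in V_\Lambda$ with $\theta(M)=0$ and $\theta(M')\le 0$ for every strict subobject $M'$ of $M$. $\mathcal W(\theta)$ is the class of all $X\in\mathcal G$ with $\theta\in D_{\mathcal G}(X)$. *)

From HB Require Import structures.
From mathcomp Require Import all_boot all_order all_algebra.
From mathcomp Require Import falgebra.
From mathcomp Require Import reals.
Set Implicit Arguments. Unset Strict Implicit. Unset Printing Implicit Defensive.
Import Order.TTheory GRing.Theory Num.Theory.
Local Open Scope ring_scope.

Section Modules.
Variables (F : fieldType) (Lam : falgType F).

(* A finitely generated right Lam-module: a finite-dimensional F-vector space
   F^d (row vectors) with a right action  m . a = m *m ract a,  where ract is an
   F-linear unital multiplicative map Lam -> 'M_d  (m.(ab) = (m.a).b). *)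
Record rmod := RMod {
  rdim : nat;
  ract : Lam -> 'M[F]_rdim;
  ract_lin : forall (k : F) (a b : Lam), ract (k *: a + b) = k *: ract a + ract b;
  ract1 : ract 1 = 1%:M;
  ractM : forall a b : Lam, ract (a * b) = ract a *m ract b }.

Definition is_hom (M N : rmod) (f : 'M[F]_(rdim M, rdim N)) : Prop :=
  forall a : Lam, ract M a *m f = f *m ract N a.

Definition ses (X Z Y : rmod) (f : 'M[F]_(rdim X, rdim Z))
    (g : 'M[F]_(rdim Z, rdim Y)) : Prop :=
  [/\ is_hom f, is_hom g, row_free f, row_full g & (f == kermx g)%MS].

Definition exact3 (X Z Y : rmod) : Prop := exists f g, @ses X Z Y f g.

Definition is_submod (M : rmod) (U : 'M[F]_(rdim M)) : Prop :=
  forall a : Lam, (U *m ract M a <= U)%MS.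

(* "The submodule U of M (with induced structure) lies in the class C":
   some module in C maps isomorphically onto U. *)
Definition sub_in (C : rmod -> Prop) (M : rmod) (U : 'M[F]_(rdim M)) : Prop :=
  exists (N : rmod) (f : 'M[F]_(rdim N, rdim M)),
    [/\ is_hom f, row_free f, (f == U)%MS & C N].

Definition quot_in (C : rmod -> Prop) (M : rmod) (U : 'M[F]_(rdim M)) : Prop :=
  exists (N : rmod) (g : 'M[F]_(rdim M, rdim N)),
    [/\ is_hom g, row_full g, (kermx g == U)%MS & C N].

Definition torsion_class (G : rmod -> Prop) : Prop :=
  [/\ exists M, G M,
      (forall M N (f : 'M[F]_(rdim M, rdim N)),
          is_hom f -> row_free f -> row_full f -> G M -> G N),
      (forall X Z Y, exact3 X Z Y -> G X -> G Y -> G Z) &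
      (forall M N (g : 'M[F]_(rdim M, rdim N)),
          is_hom g -> row_full g -> G M -> G N)].

Variable G : rmod -> Prop.

Definition subobject (B : rmod) (U : 'M[F]_(rdim B)) : Prop :=
  is_submod U /\ sub_in G U.

Definition strict_subobject (B : rmod) (U : 'M[F]_(rdim B)) : Prop :=
  subobject U /\
  forall B' : 'M[F]_(rdim B), subobject B' -> sub_in G (U :&: B')%MS.

Definition strict_exact (X Z Y : rmod) : Prop :=
  [/\ G X, G Z, G Y &
      exists f g, @ses X Z Y f g /\ strict_subobject (<<f>>%MS)].

Definition strict_morphism (A B : rmod) (f : 'M[F]_(rdim A, rdim B)) : Prop :=
  [/\ G A, G B, is_hom f, strict_subobject (kermx f) & strict_subobject (<<f>>%MS)].

Definition pseudo_wide (W : rmod -> Prop) : Prop :=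
  [/\ exists M, W M,
      (forall M, W M -> G M),
      (forall A B (f : 'M[F]_(rdim A, rdim B)), W A -> W B -> strict_morphism f ->
          [/\ sub_in W (kermx f), sub_in W (<<f>>%MS) & quot_in W (<<f>>%MS)]) &
      (forall X Z Y, strict_exact X Z Y -> W X -> W Y -> W Z)].

Variable R : realType.

(* Elements of V_Lam = Hom_Z(K_0 Lam, R): functions on modules additive on
   short exact sequences (universal property of the Grothendieck group). *)
Definition additive_fun (theta : rmod -> R) : Prop :=
  forall X Z Y, exact3 X Z Y -> theta Z = theta X + theta Y.

Definition in_D (theta : rmod -> R) (M : rmod) : Prop :=
  theta M = 0 /\
  forall (N : rmod) (f : 'M[F]_(rdim N, rdim M)),
    is_hom f -> row_free f -> strict_subobject (<<f>>%MS) -> theta N <= 0.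

Definition Wtheta (theta : rmod -> R) (X : rmod) : Prop := G X /\ in_D theta X.

End Modules.

From mathcomp Require Import all_boot all_order all_algebra falgebra reals.
Set Implicit Arguments. Unset Strict Implicit. Unset Printing Implicit Defensive.
Import Order.TTheory GRing.Theory Num.Theory.
Local Open Scope ring_scope.

(* Two facts drive everything: theta is additive on short exact sequences, and
   strictness transports well.  A strict subobject of a strict subobject is
   strict; and if 0 -> X -> Z -> Y -> 0 is exact with X in G, a strict
   subobject S of Z meets X in a strict subobject of X and maps onto a strict
   subobject of Y, while preimages in Z of strict subobjects of Y are strict
   when X is strict in Z.  For X, Y in W(theta) this gives
   theta S = theta (S :&: X) + theta (S / S :&: X) <= 0, i.e. closure under
   arbitrary extensions.  For a strict morphism f : A -> B inside W(theta),
   theta A = theta (ker f) + theta (im f) with both terms <= 0, so both vanish;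
   by the transports above, ker f, im f and coker f then inherit the defining
   inequalities of W(theta) from A and B. *)

Section MatrixSpaces.
Variable F : fieldType.

Lemma eqmxb_refl m n (A : 'M[F]_(m, n)) : (A == A)%MS.
Proof. by apply/andP; split. Qed.

Lemma eqmxb_sym m1 m2 n (A : 'M[F]_(m1, n)) (B : 'M_(m2, n)) :
  (A == B)%MS -> (B == A)%MS.
Proof. by move=> /eqmxP eAB; apply/eqmxP; exact: eqmx_sym. Qed.

Lemma eqmxb_trans m1 m2 m3 n (A : 'M[F]_(m1, n)) (B : 'M_(m2, n)) (C : 'M_(m3, n)) :
  (A == B)%MS -> (B == C)%MS -> (A == C)%MS.
Proof. by move=> /eqmxP eAB /eqmxP eBC; apply/eqmxP; exact: eqmx_trans eAB eBC. Qed.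

Lemma eqmxb_gen m n (A : 'M[F]_(m, n)) : (A == <<A>>)%MS.
Proof. exact/eqmxP/eqmx_sym/genmxE. Qed.

Lemma eqmxb_Mr m1 m2 n p (A : 'M[F]_(m1, n)) (B : 'M_(m2, n)) (C : 'M_(n, p)) :
  (A == B)%MS -> (A *m C == B *m C)%MS.
Proof. by move=> /eqmxP eAB; apply/eqmxP; exact: eqmxMr. Qed.

Lemma eqmxb_cap m1 m2 m3 m4 n (A : 'M[F]_(m1, n)) (B : 'M_(m2, n))
    (C : 'M_(m3, n)) (D : 'M_(m4, n)) :
  (A == C)%MS -> (B == D)%MS -> (A :&: B == C :&: D)%MS.
Proof.
by move=> /eqmxP eAC /eqmxP eBD; apply/andP; split; apply: capmxS; rewrite ?eAC ?eBD.
Qed.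

Lemma capmxMfree m1 m2 n p (U : 'M[F]_(m1, n)) (V : 'M_(m2, n)) (h : 'M_(n, p)) :
  row_free h -> ((U :&: V) *m h == U *m h :&: V *m h)%MS.
Proof.
move=> fh; apply/andP; split; first by rewrite sub_capmx !submxMr ?capmxSl ?capmxSr.
have Xh : (U *m h :&: V *m h <= h)%MS by apply: submx_trans (capmxSl _ _) (submxMl _ _).
rewrite -(mulmxKpV Xh) submxMfree // sub_capmx.
by rewrite -!(submxMfree _ _ fh) !(mulmxKpV Xh) capmxSl capmxSr.
Qed.

Definition premx m n (g : 'M[F]_(m, n)) (C : 'M_n) := kermx (g *m cokermx C).

Lemma sub_premx p m n (g : 'M[F]_(m, n)) (C : 'M_n) (A : 'M_(p, m)) :
  (A <= premx g C)%MS = (A *m g <= C)%MS.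
Proof. by rewrite sub_kermx submxE mulmxA. Qed.

Lemma ker_sub_premx m n (g : 'M[F]_(m, n)) (C : 'M_n) : (kermx g <= premx g C)%MS.
Proof. by rewrite sub_premx mulmx_ker sub0mx. Qed.

Lemma cap_premxM m1 m n (A : 'M[F]_(m1, m)) (g : 'M_(m, n)) (C : 'M_n) :
  ((A :&: premx g C) *m g == A *m g :&: C)%MS.
Proof.
apply/andP; split; first by rewrite sub_capmx submxMr ?capmxSl //= -sub_premx capmxSr.
case/submxP: (capmxSl (A *m g) C) => D eD.
rewrite eD mulmxA; apply: submxMr; rewrite sub_capmx submxMl sub_premx.
by rewrite -mulmxA -eD capmxSr.
Qed.

Lemma premxK m n (g : 'M[F]_(m, n)) (C : 'M_n) : row_full g -> (premx g C *m g == C)%MS.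
Proof.
move=> fg; have gC := mulmxKpV (submx_full C fg).
apply/andP; split; first by rewrite -sub_premx.
by rewrite -{1}gC submxMr // sub_premx gC.
Qed.

End MatrixSpaces.

Section ModuleConstructions.
Variables (F : fieldType) (Lam : falgType F).
Local Notation rmod := (rmod Lam).

Definition submodmx (M : rmod) m (U : 'M[F]_(m, rdim M)) : Prop :=
  forall a : Lam, stablemx U (ract M a).

Definition embedding_onto (N M : rmod) m (e : 'M[F]_(rdim N, rdim M))
    (U : 'M[F]_(m, rdim M)) : Prop :=
  [/\ is_hom e, row_free e & (e == U)%MS].

Lemma is_hom1 (M : rmod) : @is_hom _ _ M M 1%:M.
Proof. by move=> a; rewrite mulmx1 mul1mx. Qed.

Lemma is_homM (N M P : rmod) (e : 'M[F]_(rdim N, rdim M)) (h : 'M_(rdim M, rdim P)) :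
  is_hom e -> is_hom h -> is_hom (e *m h).
Proof. by move=> he hh a; rewrite mulmxA he -mulmxA hh mulmxA. Qed.

Lemma row_freeM m n p (e : 'M[F]_(m, n)) (h : 'M_(n, p)) :
  row_free e -> row_free h -> row_free (e *m h).
Proof. by move=> fe fh; rewrite /row_free (mxrankMfree _ fh). Qed.

Lemma is_hom_pinv (N M K : rmod) (e : 'M[F]_(rdim N, rdim M)) (h : 'M_(rdim K, rdim M)) :
  is_hom e -> is_hom h -> row_free h -> (e <= h)%MS -> is_hom (e *m pinvmx h).
Proof.
move=> he hh fh eh a; apply: (row_free_inj fh).
move: (e *m pinvmx h) (mulmxKpV eh) => p pe.
by rewrite -[LHS]mulmxA pe he -pe -[RHS]mulmxA hh mulmxA.
Qed.

Lemma row_free_pinv m n p (e : 'M[F]_(m, n)) (h : 'M_(p, n)) :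
  row_free e -> row_free h -> (e <= h)%MS -> row_free (e *m pinvmx h).
Proof. by move=> fe fh eh; rewrite /row_free -(mxrankMfree _ fh) (mulmxKpV eh). Qed.

Lemma submodmx_eq (M : rmod) m1 m2 (U : 'M[F]_(m1, rdim M)) (V : 'M_(m2, rdim M)) :
  (U == V)%MS -> submodmx U -> submodmx V.
Proof.
by move=> /eqmxP eUV subU a; rewrite -eUV; apply: submx_trans (subU a); rewrite submxMr ?eUV.
Qed.

Lemma submodmx_gen (M : rmod) m (U : 'M[F]_(m, rdim M)) : submodmx U -> submodmx <<U>>%MS.
Proof. exact/submodmx_eq/eqmxb_gen. Qed.

Lemma submodmx_hom (N M : rmod) (h : 'M[F]_(rdim N, rdim M)) : is_hom h -> submodmx h.
Proof. by move=> hh a; rewrite -hh submxMl. Qed.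

Lemma submodmx_ker (M P : rmod) (g : 'M[F]_(rdim M, rdim P)) : is_hom g -> submodmx (kermx g).
Proof. by move=> hg a; rewrite sub_kermx -mulmxA hg mulmxA mulmx_ker mul0mx. Qed.

Lemma submodmx_cap (M : rmod) m1 m2 (U : 'M[F]_(m1, rdim M)) (V : 'M_(m2, rdim M)) :
  submodmx U -> submodmx V -> submodmx (U :&: V)%MS.
Proof.
move=> subU subV a; rewrite sub_capmx.
by rewrite (submx_trans _ (subU a)) ?(submx_trans _ (subV a)) ?submxMr ?capmxSl ?capmxSr.
Qed.

Lemma submodmxM (K M : rmod) m (U : 'M[F]_(m, rdim K)) (h : 'M_(rdim K, rdim M)) :
  is_hom h -> submodmx U -> submodmx (U *m h).
Proof. by move=> hh subU a; rewrite -mulmxA -hh mulmxA submxMr. Qed.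

Lemma submodmxMfree (K M : rmod) m (U : 'M[F]_(m, rdim K)) (h : 'M_(rdim K, rdim M)) :
  is_hom h -> row_free h -> submodmx (U *m h) -> submodmx U.
Proof. by move=> hh fh subUh a; rewrite -(submxMfree _ _ fh) -mulmxA hh mulmxA. Qed.

Lemma submodmx_pre (M P : rmod) (g : 'M[F]_(rdim M, rdim P)) (C : 'M_(rdim P)) :
  is_hom g -> submodmx C -> submodmx (premx g C).
Proof.
move=> hg subC a; rewrite sub_premx -mulmxA hg mulmxA.
by apply: submx_trans (subC a); rewrite submxMr // -sub_premx.
Qed.

Lemma embedding_onto1 (M : rmod) : embedding_onto (1%:M : 'M[F]_(rdim M)) 1%:M.
Proof. by split; [exact: is_hom1 | rewrite /row_free mxrank1 | exact: eqmxb_refl]. Qed.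

Lemma embedding_onto_pinv (N M K : rmod) (e : 'M[F]_(rdim N, rdim M))
    (h : 'M_(rdim K, rdim M)) m (U : 'M_(m, rdim M)) :
  is_hom h -> row_free h -> (U <= h)%MS -> embedding_onto e U ->
  embedding_onto (e *m pinvmx h) <<U *m pinvmx h>>%MS.
Proof.
move=> hh fh Uh [he fe eU]; have eh : (e <= h)%MS by rewrite (eqmxP eU).
split; [exact: is_hom_pinv | exact: row_free_pinv |].
exact: eqmxb_trans (eqmxb_Mr _ eU) (eqmxb_gen _).
Qed.

Section Submodule.
Variables (M : rmod) (r : nat) (B : 'M[F]_(r, rdim M)).
Hypotheses (freeB : row_free B) (subB : submodmx B).

Definition sub_act (a : Lam) : 'M[F]_r := conjmx B (ract M a).

Lemma sub_actE a : sub_act a *m B = B *m ract M a.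
Proof. exact: mulmxKpV. Qed.

Lemma sub_act_lin k a b : sub_act (k *: a + b) = k *: sub_act a + sub_act b.
Proof. by rewrite /sub_act /conjmx ract_lin mulmxDr mulmxDl -scalemxAr -scalemxAl. Qed.

Lemma sub_act1 : sub_act 1 = 1%:M.
Proof. by rewrite /sub_act ract1 conjmx_scalar. Qed.

Lemma sub_actM a b : sub_act (a * b) = sub_act a *m sub_act b.
Proof. by rewrite /sub_act ractM conjmxM // inE; apply: subB. Qed.

Definition submodule : rmod := RMod sub_act_lin sub_act1 sub_actM.

Lemma submodule_hom : @is_hom _ _ submodule M B.
Proof. exact: sub_actE. Qed.

End Submodule.

Lemma exists_embedding (M : rmod) m (U : 'M[F]_(m, rdim M)) :
  submodmx U -> exists (N : rmod) (e : 'M_(rdim N, rdim M)), embedding_onto e U.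
Proof.
move=> subU.
have subB : submodmx (row_base U).
  by move=> a; rewrite (eqmxMr _ (eq_row_base U)) eq_row_base; exact: subU.
exists (submodule (row_base_free U) subB), (row_base U); split.
- exact: submodule_hom.
- exact: row_base_free.
- by apply/eqmxP; exact: eq_row_base.
Qed.

Section Quotient.
Variables (M : rmod) (m : nat) (U : 'M[F]_(m, rdim M)) (subU : submodmx U).
Variables (r : nat) (g : 'M[F]_(rdim M, r)) (fullg : row_full g).
Hypothesis (kergE : forall p (v : 'M_(p, rdim M)), (v <= kermx g)%MS = (v <= U)%MS).

Definition quot_act (a : Lam) : 'M[F]_r := pinvmx g *m ract M a *m g.

(* [g *m pinvmx g - 1] maps into [U = ker g], which [ract M a] preserves. *)
Lemma quot_actE a : g *m quot_act a = ract M a *m g.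
Proof.
set D := g *m pinvmx g - 1%:M.
have Dg0 : D *m g = 0 by rewrite mulmxBl -mulmxA mulVpmx // mulmx1 mul1mx subrr.
have : (D *m ract M a <= kermx g)%MS.
  rewrite kergE; apply: submx_trans (subU a); apply: submxMr.
  by rewrite -kergE sub_kermx Dg0.
rewrite sub_kermx /D mulmxBl mul1mx mulmxBl subr_eq0 => /eqP <-.
by rewrite /quot_act !mulmxA.
Qed.

Lemma quot_act_lin k a b : quot_act (k *: a + b) = k *: quot_act a + quot_act b.
Proof.
apply: (row_full_inj fullg).
by rewrite quot_actE mulmxDr -scalemxAr !quot_actE ract_lin mulmxDl scalemxAl.
Qed.

Lemma quot_act1 : quot_act 1 = 1%:M.
Proof. by apply: (row_full_inj fullg); rewrite quot_actE ract1 mulmx1 mul1mx. Qed.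

Lemma quot_actM a b : quot_act (a * b) = quot_act a *m quot_act b.
Proof.
apply: (row_full_inj fullg).
by rewrite quot_actE ractM [RHS]mulmxA quot_actE -[RHS]mulmxA quot_actE [RHS]mulmxA.
Qed.

Definition quotient : rmod := RMod quot_act_lin quot_act1 quot_actM.

Lemma quotient_proj : [/\ @is_hom _ _ M quotient g, row_full g & (kermx g == U)%MS].
Proof.
split=> //; first by move=> a; rewrite /= quot_actE.
by apply/andP; split; [rewrite -kergE | rewrite kergE].
Qed.

End Quotient.

Lemma exists_quotient (M : rmod) m (U : 'M[F]_(m, rdim M)) :
  submodmx U -> exists (Q : rmod) (q : 'M_(rdim M, rdim Q)),
    [/\ is_hom q, row_full q & (kermx q == U)%MS].
Proof.
move=> subU; set g := col_base (cokermx U).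
have kergE p (v : 'M_(p, rdim M)) : (v <= kermx g)%MS = (v <= U)%MS.
  rewrite sub_kermx submxE -(mulmx_free_eq0 _ (row_base_free (cokermx U))).
  by rewrite -mulmxA mulmx_base.
exists (quotient subU (col_base_full (cokermx U)) kergE), g.
exact: quotient_proj.
Qed.

Definition zero_rmod : rmod.
Proof. by apply: (@RMod _ Lam 0 (fun=> 0)) => *; rewrite [RHS]flatmx0. Defined.

Lemma exact3_cap_ker_img (M P X Y N : rmod) (h : 'M[F]_(rdim M, rdim P))
    m (U : 'M_(m, rdim M)) (x : 'M_(rdim X, rdim M)) (y : 'M_(rdim Y, rdim P))
    (u : 'M_(rdim N, rdim M)) :
  is_hom h -> embedding_onto x (U :&: kermx h)%MS -> embedding_onto y (U *m h) ->
  embedding_onto u U -> exact3 X N Y.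
Proof.
move=> hh [hx fx ex] [hy fy ey] [hu fu eu].
have xu : (x <= u)%MS by rewrite (eqmxP eu) (eqmxP ex) capmxSl.
have uhy : (u *m h <= y)%MS by rewrite (eqmxP ey) submxMr // (eqmxP eu).
move: (x *m pinvmx u) (mulmxKpV xu) => a au.
move: (u *m h *m pinvmx y) (mulmxKpV uhy) => b bu.
exists a, b; split.
- move=> c; apply: (row_free_inj fu).
  by rewrite -!mulmxA au hx hu !mulmxA au.
- move=> c; apply: (row_free_inj fy).
  by rewrite -!mulmxA bu mulmxA hu -mulmxA hh mulmxA -bu -mulmxA -hy.
- by rewrite /row_free -(mxrankMfree _ fu) au.
- rewrite /row_full -(mxrankMfree _ fy) bu (eqmxMr h (eqmxP eu)) -(eqmx_rank ey).
  exact: fy.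
apply/andP; split.
  rewrite sub_kermx -(mulmx_free_eq0 _ fy) -mulmxA bu mulmxA au.
  by rewrite -sub_kermx (eqmxP ex) capmxSr.
rewrite -(submxMfree _ _ fu) au (eqmxP ex) sub_capmx.
rewrite (submx_trans (submxMl _ _)) ?(eqmxP eu) //=.
by rewrite sub_kermx -mulmxA -bu mulmxA mulmx_ker mul0mx.
Qed.

(* [sub_in] for non-square [U]; for square [U] the two are convertible. *)
Definition sub_inmx (C : rmod -> Prop) (M : rmod) m (U : 'M[F]_(m, rdim M)) : Prop :=
  exists (N : rmod) (e : 'M[F]_(rdim N, rdim M)),
    [/\ is_hom e, row_free e, (e == U)%MS & C N].

Lemma sub_inmx_eq C (M : rmod) m1 m2 (U : 'M[F]_(m1, rdim M)) (V : 'M_(m2, rdim M)) :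
  (U == V)%MS -> sub_inmx C U -> sub_inmx C V.
Proof.
by move=> eUV [N [e [he fe eU CN]]]; exists N, e; split=> //; exact: eqmxb_trans eUV.
Qed.

Lemma sub_inmxM C (K M : rmod) (h : 'M[F]_(rdim K, rdim M)) m (U : 'M_(m, rdim K)) :
  is_hom h -> row_free h -> sub_inmx C U -> sub_inmx C (U *m h).
Proof.
move=> hh fh [N [e [he fe eU CN]]]; exists N, (e *m h).
by split=> //; [exact: is_homM | exact: row_freeM | exact: eqmxb_Mr].
Qed.

Lemma sub_inmxMfree C (K M : rmod) (h : 'M[F]_(rdim K, rdim M)) m (U : 'M_(m, rdim K)) :
  is_hom h -> row_free h -> sub_inmx C (U *m h) -> sub_inmx C U.
Proof.
move=> hh fh [N [e [he fe eUh CN]]].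
have eh : (e <= h)%MS by rewrite (eqmxP eUh) submxMl.
exists N, (e *m pinvmx h); split=> //; [exact: is_hom_pinv | exact: row_free_pinv |].
by apply/eqmxP/(eqmxMfree fh); rewrite (mulmxKpV eh); exact/eqmxP.
Qed.

End ModuleConstructions.

Section TorsionClass.
Variables (F : fieldType) (Lam : falgType F).
Local Notation rmod := (rmod Lam).
Variable G : rmod -> Prop.
Hypothesis G_ext : forall X Z Y : rmod, exact3 X Z Y -> G X -> G Y -> G Z.
Hypothesis G_quot : forall (M N : rmod) (g : 'M[F]_(rdim M, rdim N)),
  is_hom g -> row_full g -> G M -> G N.

Lemma G_zero_rmod : (exists M, G M) -> G (zero_rmod Lam).
Proof.
case=> M GM; apply: (G_quot (g := 0)) GM; first by move=> a; rewrite mulmx0 mul0mx.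
by rewrite /row_full mxrank0.
Qed.

Lemma sub_in_hom_img (N M : rmod) (h : 'M[F]_(rdim N, rdim M)) m (U : 'M_(m, rdim M)) :
  is_hom h -> (h == U)%MS -> G N -> sub_inmx G U.
Proof.
move=> hh ehU GN; have /eqmxP ehU' := ehU.
have [K [u [hu fu eu]]] := exists_embedding (submodmx_eq ehU (submodmx_hom hh)).
have /eqmxP eu' := eu; have hu' : (h <= u)%MS by rewrite eu' ehU'.
exists K, u; split=> //; apply: (G_quot (g := h *m pinvmx u)) GN; first exact: is_hom_pinv.
by rewrite /row_full -(mxrankMfree _ fu) (mulmxKpV hu') ehU' -eu'.
Qed.

Lemma sub_in_imgM (M P : rmod) (g : 'M[F]_(rdim M, rdim P)) m (U : 'M_(m, rdim M)) :
  is_hom g -> sub_inmx G U -> sub_inmx G (U *m g).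
Proof.
move=> hg [N [e [he _ eU GN]]].
by apply: (sub_in_hom_img (is_homM he hg) _ GN); exact: eqmxb_Mr.
Qed.

Lemma subobject_img (M P : rmod) (g : 'M[F]_(rdim M, rdim P)) (U : 'M_(rdim M)) :
  is_hom g -> subobject G U -> subobject G <<U *m g>>%MS.
Proof.
move=> hg [subU inU]; split; first exact/submodmx_gen/submodmxM.
exact: sub_inmx_eq (eqmxb_gen _) (sub_in_imgM hg inU).
Qed.

Lemma sub_in_ext (M P : rmod) (h : 'M[F]_(rdim M, rdim P)) m (U : 'M_(m, rdim M)) :
  is_hom h -> submodmx U -> sub_inmx G (U :&: kermx h)%MS -> sub_inmx G (U *m h) ->
  sub_inmx G U.
Proof.
move=> hh subU [X [x [hx fx ex GX]]] [Y [y [hy fy ey GY]]].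
have [N [u [hu fu eu]]] := exists_embedding subU.
exists N, u; split=> //; apply: (G_ext _ GX GY).
exact: exact3_cap_ker_img hh (And3 hx fx ex) (And3 hy fy ey) (And3 hu fu eu).
Qed.

Lemma strict_subobject_eq (M : rmod) (U V : 'M[F]_(rdim M)) :
  (U == V)%MS -> strict_subobject G U -> strict_subobject G V.
Proof.
move=> eUV [[subU inU] strictU]; split; first split.
- exact: submodmx_eq eUV subU.
- exact: sub_inmx_eq eUV inU.
move=> B' objB'; apply: sub_inmx_eq (strictU B' objB').
exact: eqmxb_cap (eqmxb_refl _).
Qed.

Lemma strict_subobject_trans (K M : rmod) (h : 'M[F]_(rdim K, rdim M)) (U : 'M_(rdim K)) :
  is_hom h -> row_free h -> strict_subobject G <<h>>%MS -> strict_subobject G U ->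
  strict_subobject G <<U *m h>>%MS.
Proof.
move=> hh fh [[subh _] stricth] [[subU inU] strictU]; split; first split.
- exact/submodmx_gen/submodmxM.
- exact: sub_inmx_eq (eqmxb_gen _) (sub_inmxM hh fh inU).
move=> B' [subB' inB'].
set W := (<<h>> :&: B')%MS.
have Wh : (W <= h)%MS by rewrite (submx_trans (capmxSl _ _)) ?genmxE.
set V := <<W *m pinvmx h>>%MS.
have VhW : (V *m h == W)%MS.
  by apply/andP; split; rewrite (eqmxMr h (genmxE _)) (mulmxKpV Wh) submx_refl.
have subV : submodmx V.
  exact: submodmxMfree hh fh (submodmx_eq (eqmxb_sym VhW) (submodmx_cap subh subB')).
have inV : sub_inmx G V.
  exact: sub_inmxMfree hh fh (sub_inmx_eq (eqmxb_sym VhW) (stricth B' (conj subB' inB'))).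
apply: sub_inmx_eq (sub_inmxM hh fh (strictU V (conj subV inV))).
apply: (eqmxb_trans (capmxMfree _ _ fh)).
apply/andP; split; rewrite !sub_capmx; apply/andP; split.
- by rewrite genmxE capmxSl.
- by apply: submx_trans (capmxSr _ _) _; rewrite (eqmxP VhW) capmxSr.
- by apply: submx_trans (capmxSl _ _) _; rewrite genmxE.
- rewrite (eqmxP VhW) sub_capmx capmxSr andbT.
  by apply: submx_trans (capmxSl _ _) _; rewrite !genmxE submxMl.
Qed.

Lemma strict_subobject_pinv (K M : rmod) (h : 'M[F]_(rdim K, rdim M)) (W : 'M_(rdim M)) :
  is_hom h -> row_free h -> (W <= h)%MS -> submodmx W -> sub_inmx G W ->
  (forall K' : 'M_(rdim K), subobject G K' -> sub_inmx G (W :&: <<K' *m h>>)%MS) ->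
  strict_subobject G <<W *m pinvmx h>>%MS.
Proof.
move=> hh fh Wh subW inW inWK.
have UhW : (<<W *m pinvmx h>> *m h == W)%MS.
  by apply/andP; split; rewrite (eqmxMr h (genmxE _)) (mulmxKpV Wh) submx_refl.
split; first split.
- exact: submodmxMfree hh fh (submodmx_eq (eqmxb_sym UhW) subW).
- exact: sub_inmxMfree hh fh (sub_inmx_eq (eqmxb_sym UhW) inW).
move=> K' objK'; apply: (sub_inmxMfree hh fh); apply: sub_inmx_eq (inWK K' objK').
apply: eqmxb_sym; apply: (eqmxb_trans (capmxMfree _ _ fh)).
exact: eqmxb_cap UhW (eqmxb_gen _).
Qed.

Lemma strict_subobject_surj (Z Y : rmod) (g : 'M[F]_(rdim Z, rdim Y)) (S : 'M_(rdim Z)) :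
  is_hom g -> row_full g -> sub_inmx G (kermx g) -> strict_subobject G S ->
  strict_subobject G <<S *m g>>%MS.
Proof.
move=> hg fg inK [objS strictS]; split; first exact: subobject_img.
move=> Y' [subY' inY'].
have subP : submodmx (premx g Y') := submodmx_pre hg subY'.
have inP : sub_inmx G (premx g Y').
  apply: (sub_in_ext hg subP); last exact: sub_inmx_eq (eqmxb_sym (premxK _ fg)) inY'.
  apply: sub_inmx_eq inK; apply/andP; split; last exact: capmxSr.
  by rewrite sub_capmx ker_sub_premx submx_refl.
apply: sub_inmx_eq (sub_in_imgM hg (strictS _ (conj subP inP))).
apply: (eqmxb_trans (cap_premxM _ _ _)).
exact: eqmxb_cap (eqmxb_gen _) (eqmxb_refl _).
Qed.

Lemma strict_subobject_pre (B Q : rmod) (q : 'M[F]_(rdim B, rdim Q)) (I : 'M_(rdim B))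
    (C : 'M_(rdim Q)) :
  is_hom q -> row_full q -> (kermx q == I)%MS -> strict_subobject G I ->
  strict_subobject G C -> strict_subobject G (premx q C).
Proof.
move=> hq fq /eqmxP kerI [[subI inI] strictI] [[subC inC] strictC].
have subP : submodmx (premx q C) := submodmx_pre hq subC.
have IP : (I <= premx q C)%MS by rewrite -kerI ker_sub_premx.
split; first split => //.
  apply: (sub_in_ext hq subP); last exact: sub_inmx_eq (eqmxb_sym (premxK _ fq)) inC.
  apply: sub_inmx_eq inI; apply/andP; split; first by rewrite sub_capmx IP kerI submx_refl.
  by rewrite -kerI capmxSr.
move=> B' [subB' inB'].
apply: (sub_in_ext hq (submodmx_cap subP subB')).
  apply: sub_inmx_eq (strictI B' (conj subB' inB')); apply/andP; split.
    by rewrite sub_capmx capmxS //= kerI capmxSl.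
  by rewrite sub_capmx -kerI capmxSr (submx_trans (capmxSl _ _) (capmxSr _ _)).
apply: sub_inmx_eq (strictC _ (subobject_img hq (conj subB' inB'))).
apply: eqmxb_sym; rewrite [(premx q C :&: B')%MS]capmxC [(C :&: _)%MS]capmxC.
apply: (eqmxb_trans (cap_premxM _ _ _)).
exact: eqmxb_cap (eqmxb_gen _) (eqmxb_refl _).
Qed.

Lemma strict_subobject_cap_ker (X Z Y : rmod) (f : 'M[F]_(rdim X, rdim Z))
    (g : 'M_(rdim Z, rdim Y)) (S : 'M_(rdim Z)) :
  ses f g -> G X -> strict_subobject G S ->
  strict_subobject G <<(S :&: kermx g) *m pinvmx f>>%MS.
Proof.
move=> [hf hg ff _ efg] GX [[subS _] strictS].
have kerf : (kermx g <= f)%MS by rewrite (eqmxP efg).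
have inK : sub_inmx G (kermx g) by exists X, f.
apply: (strict_subobject_pinv hf ff).
- exact: submx_trans (capmxSr _ _) kerf.
- exact: submodmx_cap subS (submodmx_ker hg).
- exact: strictS _ (conj (submodmx_ker hg) inK).
move=> K' objK'; apply: sub_inmx_eq (strictS _ (subobject_img hf objK')).
apply/andP; split; last by rewrite capmxS ?capmxSl.
rewrite sub_capmx capmxSr andbT capmxS // genmxE.
by rewrite (submx_trans (submxMl _ _)) // (eqmxP efg).
Qed.

Section Theta.
Variables (R : realType) (theta : rmod -> R).
Hypothesis theta_add : additive_fun theta.

Local Notation W := (Wtheta G theta).

Lemma theta_dim0 (N : rmod) : rdim N = 0 -> theta N = 0.
Proof.
move=> N0; have hom0 : @is_hom _ _ N N 0 by move=> a; rewrite mulmx0 mul0mx.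
have : exact3 N N N.
  have full0 : 0%N == rdim N by rewrite N0.
  exists 0, 0; split; rewrite // /row_free /row_full ?mxrank0 //.
  by rewrite /eqmx sub0mx submx_full // /row_full mxrank0.
by move/theta_add/eqP; rewrite -subr_eq subrr eq_sym => /eqP.
Qed.

Lemma theta_cap_ker_img (M P X Y N : rmod) (h : 'M[F]_(rdim M, rdim P))
    m (U : 'M_(m, rdim M)) (x : 'M_(rdim X, rdim M)) (y : 'M_(rdim Y, rdim P))
    (u : 'M_(rdim N, rdim M)) :
  is_hom h -> embedding_onto x (U :&: kermx h)%MS -> embedding_onto y (U *m h) ->
  embedding_onto u U -> theta N = theta X + theta Y.
Proof. by move=> hh ex ey eu; apply/theta_add/(exact3_cap_ker_img hh ex ey eu). Qed.

Lemma theta_ker_img (M P X Y : rmod) (h : 'M[F]_(rdim M, rdim P))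
    (x : 'M_(rdim X, rdim M)) (y : 'M_(rdim Y, rdim P)) :
  is_hom h -> embedding_onto x (kermx h) -> embedding_onto y h -> theta M = theta X + theta Y.
Proof.
move=> hh [hx fx ex] [hy fy ey]; apply: (theta_cap_ker_img hh _ _ (embedding_onto1 M)).
  by split=> //; rewrite cap1mx.
by split=> //; rewrite mul1mx.
Qed.

Lemma in_D_le0 (M N : rmod) (e : 'M[F]_(rdim N, rdim M)) (U : 'M_(rdim M)) :
  in_D G theta M -> embedding_onto e U -> strict_subobject G U -> theta N <= 0.
Proof.
move=> [_ DM] [he fe eU] strictU; apply: DM he fe _.
exact: strict_subobject_eq (eqmxb_trans (eqmxb_sym eU) (eqmxb_gen e)) strictU.
Qed.

Lemma Wtheta_zero_rmod : (exists M, G M) -> W (zero_rmod Lam).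
Proof.
move=> G_nonempty; split; first exact: G_zero_rmod.
split=> [|N e _ fe _]; first exact: theta_dim0.
by rewrite theta_dim0 //; apply/eqP; rewrite -leqn0 -(eqP fe) rank_leq_col.
Qed.

Lemma Wtheta_ext (X Z Y : rmod) : exact3 X Z Y -> W X -> W Y -> W Z.
Proof.
move=> exZ [GX DX] [GY DY]; have [f [g sesfg]] := exZ.
have [hf hg ff fg efg] := sesfg.
split; first exact: G_ext exZ GX GY.
split=> [|N s hs fs strictS]; first by rewrite (theta_add exZ) DX.1 DY.1 addr0.
have inK : sub_inmx G (kermx g) by exists X, f.
have [K [k [hk fk ek GK]]] := strictS.2 _ (conj (submodmx_ker hg) inK).
have [YS [y [hy fy ey]]] := exists_embedding (submodmx_gen (submodmxM hg strictS.1.1)).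
have embY : embedding_onto y (<<s>>%MS *m g).
  by split=> //; exact: eqmxb_trans ey (eqmxb_sym (eqmxb_gen _)).
rewrite (theta_cap_ker_img hg (And3 hk fk ek) embY (And3 hs fs (eqmxb_gen s))).
rewrite -[0]addr0 lerD //.
  apply: (in_D_le0 DX _ (strict_subobject_cap_ker sesfg GX strictS)).
  apply: embedding_onto_pinv (And3 hk fk ek) => //.
  by rewrite (submx_trans (capmxSr _ _)) // (eqmxP efg).
by apply: in_D_le0 DY (And3 hy fy ey) (strict_subobject_surj hg fg inK strictS).
Qed.

Lemma Wtheta_strict_sub (M P : rmod) (h : 'M[F]_(rdim P, rdim M)) (U : 'M_(rdim M)) :
  W M -> strict_subobject G U -> embedding_onto h U -> G P -> theta P = 0 -> W P.
Proof.
move=> [_ DM] strictU [hh fh ehU] GP thP; split=> //; split=> // N e he fe strictE.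
have strict_h : strict_subobject G <<h>>%MS.
  exact: strict_subobject_eq (eqmxb_trans (eqmxb_sym ehU) (eqmxb_gen h)) strictU.
apply: (in_D_le0 DM _ (strict_subobject_trans hh fh strict_h strictE)).
split; [exact: is_homM | exact: row_freeM |].
exact: eqmxb_trans (eqmxb_Mr _ (eqmxb_gen e)) (eqmxb_gen _).
Qed.

Lemma Wtheta_strict_quot (B Q I : rmod) (q : 'M[F]_(rdim B, rdim Q))
    (i : 'M_(rdim I, rdim B)) (U : 'M_(rdim B)) :
  W B -> is_hom q -> row_full q -> (kermx q == U)%MS -> strict_subobject G U ->
  embedding_onto i U -> theta I = 0 -> W Q.
Proof.
move=> [GB [thB DB]] hq fq kerU strictU [hi fi eiU] thI.
have embK : embedding_onto i (kermx q) by split=> //; exact: eqmxb_trans eiU (eqmxb_sym kerU).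
split; first exact: G_quot hq fq GB.
split=> [|N e he fe strictE].
  have embQ : embedding_onto (1%:M : 'M_(rdim Q)) q.
    by split; [exact: is_hom1 | rewrite /row_free mxrank1 | rewrite /eqmx submx1 submx_full].
  by move: (theta_ker_img hq embK embQ); rewrite thB thI add0r.
have strictP := strict_subobject_pre hq fq kerU strictU strictE.
have [C [c embC]] := exists_embedding strictP.1.1.
have <- : theta C = theta N.
  rewrite (theta_cap_ker_img hq _ _ embC (x := i) (y := e)) ?thI ?add0r //.
    case: embK => _ _ eiK; split=> //; apply: (eqmxb_trans eiK).
    by rewrite /eqmx sub_capmx ker_sub_premx capmxSr submx_refl.
  by split=> //; exact: eqmxb_trans (eqmxb_gen e) (eqmxb_sym (premxK _ fq)).
exact: in_D_le0 (conj thB DB) embC strictP.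
Qed.

Lemma Wtheta_strict_morphism (A B : rmod) (f : 'M[F]_(rdim A, rdim B)) :
  W A -> W B -> strict_morphism G f ->
  [/\ sub_in W (kermx f), sub_in W <<f>>%MS & quot_in W <<f>>%MS].
Proof.
move=> WA WB [_ _ hf strictK strictI].
have [_ [K [k [hk fk ek GK]]]] := strictK.1.
have [_ [I [i [hi fi ei GI]]]] := strictI.1.
have embI : embedding_onto i f by split=> //; exact: eqmxb_trans ei (eqmxb_sym (eqmxb_gen f)).
have thK := in_D_le0 WA.2 (And3 hk fk ek) strictK.
have thI := in_D_le0 WB.2 (And3 hi fi ei) strictI.
have /andP[/eqP thK0 /eqP thI0] : (theta K == 0) && (theta I == 0).
  by rewrite -naddr_eq0 // -(theta_ker_img hf (And3 hk fk ek) embI) WA.2.1.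
have [Q [q [hq fq kerq]]] := exists_quotient (submodmx_gen (submodmx_hom hf)).
split.
- by exists K, k; split=> //; exact: Wtheta_strict_sub WA strictK (And3 hk fk ek) GK thK0.
- by exists I, i; split=> //; exact: Wtheta_strict_sub WB strictI (And3 hi fi ei) GI thI0.
- exists Q, q; split=> //.
  exact: Wtheta_strict_quot WB hq fq kerq strictI (And3 hi fi ei) thI0.
Qed.

End Theta.

End TorsionClass.

Theorem mainTheorem12 (F : fieldType) (Lam : falgType F)
  (G : rmod Lam -> Prop) (R : realType) (theta : rmod Lam -> R) :
  torsion_class G -> additive_fun theta ->
  pseudo_wide G (Wtheta G theta) /\
  (forall X Z Y : rmod Lam, exact3 X Z Y ->
     Wtheta G theta X -> Wtheta G theta Y -> Wtheta G theta Z).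
Proof.
case=> G_nonempty _ G_ext G_quot theta_add.
have W_ext := Wtheta_ext G_ext G_quot theta_add.
split=> //; split.
- by exists (zero_rmod Lam); exact: Wtheta_zero_rmod.
- by move=> M [].
- exact: Wtheta_strict_morphism.
- by move=> X Z Y [_ _ _ [f [g [sesfg _]]]]; apply: W_ext; exists f, g.
Qed.
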